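(* Let $G$, $H$, $K$ be impartial games with $H = K$. Then $G\circ H = G\circ K$.
   Context: All games are finite (short) impartial games under normal play. A game is identified with its set of options; $\mathbf{E}$ denotes the game with no options, and $\equiv$ denotes identity of games (same set of options, recursively). The disjunctive sum is $G+H \equiv \{g+H,\ G+h\}$. A $\mathcal{P}$-position is a game all of whose options are $\mathcal{N}$-positions; an $\mathcal{N}$-position has some option that is a $\mathcal{P}$-position. Two games are equal, $G=H$, if $G+X$ and $H+X$ have the same outcome for every game $X$; for impartial games this holds iff $G+H$ is a $\mathcal{P}$-position. (Equality is weaker than identity $\equiv$.) The split sum is defined recursively by: $G\circ H \equiv \mathbf{E}$ if $G\equiv \mathbf{E}$; $G\circ H\equiv G$ if $H\equiv\mathbf{E}$ (and $G\not\equiv\mathbf{E}$); otherwise $G\circ H \equiv \{G\circ h,\ g\circ H\}$ where $g$ ranges over the options of $G$ and $h$ over the options of $H$. *)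

(* Finite impartial games, represented by their (finite) list
   of options; identity of games (≡) is recursive set-equality of options,
   and every notion below is invariant under it. *)
From Stdlib Require Import List Bool.
Import ListNotations.

Inductive game : Type := Game : list game -> game.

Definition options (G : game) : list game := let (l) := G in l.

Definition E : game := Game [].

Fixpoint dsum (G H : game) {struct G} : game :=
  match G with
  | Game gs =>
      let fix aux (H : game) : game :=
        match H with
        | Game hs => Game (map (fun g => dsum g H) gs ++ map aux hs)
        end in
      aux H
  end.

(* Split sum:  G∘H = E if G ≡ E;  G if H ≡ E (G not ≡ E);
   otherwise { G∘h, g∘H }.  (A game is ≡ E iff it has no options.) *)
Fixpoint split_sum (G H : game) {struct G} : game :=
  match G with
  | Game gs =>
      let fix aux (H : game) : game :=
        match H with
        | Game hs =>
            match gs, hs with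
            | [], _ => E
            | _, [] => G
            | _, _ => Game (map aux hs ++ map (fun g => split_sum g H) gs)
            end
        end in
      aux H
  end.

Fixpoint isP (G : game) : bool :=
  match G with
  | Game gs => forallb (fun g => negb (isP g)) gs
  end.

Definition game_eq (G H : game) : Prop :=
  forall X : game, isP (dsum G X) = isP (dsum H X).

(* The proof goes through Sprague-Grundy values.  After defining the mex
   of a list of naturals and the Grundy value of a game, we establish:
   - the two defining properties of Grundy values (no option has the same
     value; every smaller value is attained by an option), and the
     criterion that two games whose options all avoid the other's value
     have equal Grundy values;
   - [isP (A + B)] holds exactly when [grundy A = grundy B], hence game
     equality coincides with equality of Grundy values;
   - for the nim-heap [nim n], whose options are the [nim m] with [m < n],
     the Grundy value of [G∘H] equals that of [G∘nim (grundy H)].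
   The theorem follows: equal games have equal Grundy values, hence the
   same associated nim-heap, hence split sums with equal Grundy values. *)
From Stdlib Require Import List Arith Lia.
Import ListNotations.

Lemma game_ind_options (P : game -> Prop) :
  (forall G, (forall g, In g (options G) -> P g) -> P G) -> forall G, P G.
Proof.
  intros step. fix IH 1. intros [gs]. apply step. simpl.
  revert gs. fix IHl 1. intros [|g gs] x Hx; [destruct Hx|].
  destruct Hx as [<-|Hx].
  - apply IH.
  - exact (IHl gs x Hx).
Qed.

(* The minimal excludant, searched from [n] with [fuel] candidates left;
   [length l + 1] candidates from 0 always suffice. *)
Fixpoint mex_from (l : list nat) (n fuel : nat) : nat :=
  match fuel with
  | 0 => n
  | S fuel => if in_dec Nat.eq_dec n l then mex_from l (S n) fuel else n
  end.

Definition mex (l : list nat) : nat := mex_from l 0 (S (length l)).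

Lemma mex_from_below l : forall fuel n, (forall w, w < n -> In w l) ->
  forall w, w < mex_from l n fuel -> In w l.
Proof.
  induction fuel as [|fuel IH]; intros n Hn w Hw; simpl in Hw; auto.
  destruct (in_dec Nat.eq_dec n l) as [Hin|Hin]; auto.
  apply (IH (S n)); auto.
  intros w' Hw'. destruct (Nat.eq_dec w' n); [subst; auto | apply Hn; lia].
Qed.

Lemma prefix_length l n : (forall w, w < n -> In w l) -> n <= length l.
Proof.
  intros H. rewrite <- (length_seq n 0).
  apply NoDup_incl_length; [apply seq_NoDup|].
  intros w Hw. apply in_seq in Hw. apply H. lia.
Qed.

Lemma mex_from_notin l : forall fuel n, (forall w, w < n -> In w l) ->
  length l < n + fuel -> ~ In (mex_from l n fuel) l.
Proof.
  induction fuel as [|fuel IH]; intros n Hn Hl; simpl.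
  - apply prefix_length in Hn. lia.
  - destruct (in_dec Nat.eq_dec n l) as [Hin|Hin]; auto.
    apply IH; [|lia].
    intros w' Hw'. destruct (Nat.eq_dec w' n); [subst; auto | apply Hn; lia].
Qed.

Lemma mex_notin l : ~ In (mex l) l.
Proof. apply mex_from_notin; [intros; lia | lia]. Qed.

Lemma mex_below l w : w < mex l -> In w l.
Proof. apply mex_from_below. intros; lia. Qed.

Fixpoint grundy (G : game) : nat :=
  match G with Game gs => mex (map grundy gs) end.

Lemma grundy_opt A x : In x (options A) -> grundy x <> grundy A.
Proof.
  destruct A as [gs]; simpl. intros Hx Heq. apply (mex_notin (map grundy gs)).
  rewrite <- Heq. apply in_map. exact Hx.
Qed.

Lemma grundy_mex A w : w < grundy A -> exists x, In x (options A) /\ grundy x = w.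
Proof.
  destruct A as [gs]; simpl. intros Hw. apply mex_below, in_map_iff in Hw.
  destruct Hw as [x [Hx Hin]]. eauto.
Qed.

(* If no option of A has the value of B and vice versa, the values agree:
   otherwise the game with the larger value has an option of the smaller. *)
Lemma grundy_eq_of_options A B :
  (forall a, In a (options A) -> grundy a <> grundy B) ->
  (forall b, In b (options B) -> grundy b <> grundy A) ->
  grundy A = grundy B.
Proof.
  intros HA HB.
  destruct (lt_eq_lt_dec (grundy A) (grundy B)) as [[Hlt|Heq]|Hlt]; auto.
  - destruct (grundy_mex B _ Hlt) as [b [Hb Hg]]. now destruct (HB b Hb).
  - destruct (grundy_mex A _ Hlt) as [a [Ha Hg]]. now destruct (HA a Ha).
Qed.

Lemma isP_true A : isP A = true <-> forall x, In x (options A) -> isP x = false.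
Proof.
  destruct A as [gs]; simpl. rewrite forallb_forall.
  split; intros H x Hx; specialize (H x Hx); destruct (isP x); simpl in *; congruence.
Qed.

Lemma dsum_options A B x : In x (options (dsum A B)) <->
  (exists a, In a (options A) /\ x = dsum a B) \/
  (exists b, In b (options B) /\ x = dsum A b).
Proof.
  destruct A as [gs], B as [hs].
  change (dsum (Game gs) (Game hs)) with
    (Game (map (fun g => dsum g (Game hs)) gs ++ map (dsum (Game gs)) hs)).
  simpl. rewrite in_app_iff, !in_map_iff.
  split; intros [[y [H1 H2]]|[y [H1 H2]]]; eauto.
Qed.

Lemma isP_dsum A : forall B, isP (dsum A B) = (grundy A =? grundy B).
Proof.
  induction A as [A IHA] using game_ind_options.
  induction B as [B IHB] using game_ind_options.
  destruct (grundy A =? grundy B) eqn:Hg;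
    [apply Nat.eqb_eq in Hg | apply Nat.eqb_neq in Hg].
  - apply isP_true. intros x Hx.
    apply dsum_options in Hx as [[a [Ha ->]]|[b [Hb ->]]].
    + rewrite (IHA a Ha). apply Nat.eqb_neq. rewrite <- Hg. now apply grundy_opt.
    + rewrite (IHB b Hb). apply Nat.eqb_neq. rewrite Hg. intros E.
      now apply (grundy_opt B b).
  - destruct (isP (dsum A B)) eqn:HP; auto. exfalso. rewrite isP_true in HP.
    destruct (lt_eq_lt_dec (grundy A) (grundy B)) as [[Hlt|Heq]|Hlt]; [|easy|].
    + destruct (grundy_mex B _ Hlt) as [b [Hb Hgb]].
      assert (Hopt : In (dsum A b) (options (dsum A B))) by (apply dsum_options; eauto).
      specialize (HP _ Hopt). rewrite (IHB b Hb), Hgb, Nat.eqb_refl in HP. discriminate.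
    + destruct (grundy_mex A _ Hlt) as [a [Ha Hga]].
      assert (Hopt : In (dsum a B) (options (dsum A B))) by (apply dsum_options; eauto).
      specialize (HP _ Hopt). rewrite (IHA a Ha), Hga, Nat.eqb_refl in HP. discriminate.
Qed.

Lemma game_eq_iff_grundy A B : game_eq A B <-> grundy A = grundy B.
Proof.
  split.
  - intros Heq. specialize (Heq B). rewrite !isP_dsum, Nat.eqb_refl in Heq.
    now apply Nat.eqb_eq.
  - intros Hg X. now rewrite !isP_dsum, Hg.
Qed.

Fixpoint nim_options (n : nat) : list game :=
  match n with
  | 0 => []
  | S m => Game (nim_options m) :: nim_options m
  end.

Definition nim (n : nat) : game := Game (nim_options n).

Lemma nim_options_spec n x : In x (options (nim n)) <-> exists m, m < n /\ x = nim m.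
Proof.
  induction n as [|n IH]; simpl.
  - split; [tauto | intros [m [Hm _]]; lia].
  - rewrite IH. split.
    + intros [<-|[m [Hm ->]]]; [exists n | exists m]; split; auto; lia.
    + intros [m [Hm ->]]. destruct (Nat.eq_dec m n) as [->|Hne]; [now left|].
      right. exists m. split; auto; lia.
Qed.

Lemma split_sum_E g : split_sum g E = g.
Proof. destruct g as [[|a l]]; reflexivity. Qed.

Lemma split_sum_nil H : split_sum (Game []) H = E.
Proof. destruct H; reflexivity. Qed.

Lemma split_sum_options G H x : options G <> [] ->
  (In x (options (split_sum G H)) <->
  (exists h, In h (options H) /\ x = split_sum G h) \/
  (exists g, In g (options G) /\ x = split_sum g H)).
Proof.
  destruct G as [[|g0 gs]]; [easy|]. intros _.
  destruct H as [[|h0 hs]].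
  - change (split_sum (Game (g0 :: gs)) (Game [])) with (Game (g0 :: gs)).
    fold E. simpl options. split.
    + intros Hx. right. exists x. now rewrite split_sum_E.
    + intros [[h [[] _]]|[g [Hg ->]]]. now rewrite split_sum_E.
  - change (split_sum (Game (g0 :: gs)) (Game (h0 :: hs))) with
      (Game (map (split_sum (Game (g0 :: gs))) (h0 :: hs) ++
             map (fun g => split_sum g (Game (h0 :: hs))) (g0 :: gs))).
    unfold options at 1. rewrite in_app_iff, !in_map_iff.
    split; intros [[y [H1 H2]]|[y [H1 H2]]]; eauto.
Qed.

Lemma grundy_split_sum_nim G : forall H,
  grundy (split_sum G H) = grundy (split_sum G (nim (grundy H))).
Proof.
  induction G as [G IHG] using game_ind_options.
  destruct G as [[|g0 gs]]; [intros; now rewrite !split_sum_nil|].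
  set (G := Game (g0 :: gs)) in *.
  assert (Hne : options G <> []) by discriminate.
  assert (HmoveH : forall H x, In x (options H) ->
            In (split_sum G x) (options (split_sum G H)))
    by (intros H x Hx; apply split_sum_options; eauto).
  assert (HmoveG : forall H g, In g (options G) ->
            In (split_sum g H) (options (split_sum G H)))
    by (intros H g Hg; apply split_sum_options; eauto).
  induction H as [H IHH] using game_ind_options.
  apply grundy_eq_of_options; intros x Hx;
    apply (split_sum_options _ _ _ Hne) in Hx as [[h [Hh ->]]|[g [Hg ->]]].
  - (* G∘h has the value of G∘*(grundy h), which is an option of G∘*(grundy H)
       or has it as an option, according to the order of the two values *)
    rewrite (IHH h Hh).
    destruct (lt_eq_lt_dec (grundy h) (grundy H)) as [[Hlt|Heq]|Hgt].
    + apply grundy_opt, HmoveH, nim_options_spec. eauto.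
    + now destruct (grundy_opt H h Hh).
    + intros Heq. symmetry in Heq. revert Heq.
      apply grundy_opt, HmoveH, nim_options_spec. eauto.
  - rewrite (IHG g Hg H). now apply grundy_opt, HmoveG.
  - (* G∘*m with m < grundy H: realised by an option of H *)
    apply nim_options_spec in Hh as [m [Hm ->]].
    destruct (grundy_mex H m Hm) as [h [Hh <-]].
    rewrite <- (IHH h Hh). now apply grundy_opt, HmoveH.
  - rewrite <- (IHG g Hg H). now apply grundy_opt, HmoveG.
Qed.

Theorem theorem2p5 (G H K : game) :
  game_eq H K -> game_eq (split_sum G H) (split_sum G K).
Proof.
  rewrite !game_eq_iff_grundy. intros Hg.
  now rewrite (grundy_split_sum_nim G H), (grundy_split_sum_nim G K), Hg.
Qed.
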